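(* The graphs $\mathbf{X}_6$ and $\mathbf{X}_7$ are of finite mutation type, i.e. each of them is mutation-equivalent to only finitely many graphs up to isomorphism.
   Context: A graph here is a finite directed multigraph with no loops and no oriented $2$-cycles (never arrows both from $i$ to $j$ and from $j$ to $i$); multiple arrows in the same direction are allowed. Such graphs correspond to skew-symmetric integer matrices $B=(b_{ij})$, with $b_{ij}>0$ meaning $b_{ij}$ arrows from $j$ to $i$. The mutation $\mu_k\Gamma$ of $\Gamma$ at a vertex $k$ is obtained as follows: for every pair of arrows $i\to k$ and $k\to j$ add a new arrow $i\to j$; then reverse every arrow starting or ending at $k$; then repeatedly delete pairs of opposite arrows $i\to j$, $j\to i$ until no oriented $2$-cycles remain. (Equivalently, $b'_{ij}=-b_{ij}$ if $i=k$ or $j=k$, and $b'_{ij}=b_{ij}+[b_{ik}]_+[b_{kj}]_+-[-b_{ik}]_+[-b_{kj}]_+$ otherwise.) Two graphs are mutation-equivalent if one is obtained from the other by a sequence of mutations and a relabeling of vertices. The mutation class of $\Gamma$ is the set of isomorphism classes of graphs mutation-equivalent to $\Gamma$; $\Gamma$ is of finite mutation type (mutation-finite) if its mutation class is finite. $\mathbf{X}_6$ is the graph with vertices $x,w,y_1,z_1,y_2,z_2$ and arrows: two arrows $y_1\to z_1$, one arrow $z_1\to x$, one arrow $x\to y_1$; two arrows $y_2\to z_2$, one arrow $z_2\to x$, one arrow $x\to y_2$; and one arrow $w\to x$. $\mathbf{X}_7$ is the graph with vertices $x,y_1,z_1,y_2,z_2,y_3,z_3$ and, for each $i=1,2,3$,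 two arrows $y_i\to z_i$, one arrow $z_i\to x$ and one arrow $x\to y_i$ (and no other arrows). *)

From HB Require Import structures.
From mathcomp Require Import all_boot all_order all_algebra all_fingroup.
Set Implicit Arguments. Unset Strict Implicit. Unset Printing Implicit Defensive.
Import Order.TTheory GRing.Theory Num.Theory.
Local Open Scope ring_scope.

(* A graph on vertex set 'I_n is encoded by its skew-symmetric exchange
   matrix B : 'M[int]_n, where B i j > 0 means B i j arrows from j to i. *)

Definition pos_part (x : int) : int := Num.max x 0.

Definition mutation (n : nat) (k : 'I_n) (B : 'M[int]_n) : 'M[int]_n :=
  \matrix_(i, j)
    if (i == k) || (j == k) then - B i j
    else B i j + pos_part (B i k) * pos_part (B k j)
               - pos_part (- B i k) * pos_part (- B k j).

Definition relabel (n : nat) (s : 'S_n) (B : 'M[int]_n) : 'M[int]_n :=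
  \matrix_(i, j) B (s i) (s j).

Definition isomorphic (n : nat) (B C : 'M[int]_n) : Prop :=
  exists s : 'S_n, C = relabel s B.

Inductive mut_equiv (n : nat) (B : 'M[int]_n) : 'M[int]_n -> Prop :=
| me_refl : mut_equiv B B
| me_mut (k : 'I_n) (C : 'M[int]_n) : mut_equiv B C -> mut_equiv B (mutation k C)
| me_relabel (s : 'S_n) (C : 'M[int]_n) : mut_equiv B C -> mut_equiv B (relabel s C).

Definition mutation_finite (n : nat) (B : 'M[int]_n) : Prop :=
  exists l : seq 'M[int]_n,
    forall C, mut_equiv B C -> exists2 D, D \in l & isomorphic D C.

(* Graph given by a list of arrows (source, target, multiplicity). *)
Definition graph_of (n : nat) (arrows : seq (nat * nat * nat)) : 'M[int]_n :=
  \matrix_(i, j)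
    \sum_(a <- arrows)
      ((if (a.1.1 == j :> nat) && (a.1.2 == i :> nat) then (a.2 : int) else 0)
       - (if (a.1.1 == i :> nat) && (a.1.2 == j :> nat) then (a.2 : int) else 0)).

(* X_6: vertices x=0, w=1, y1=2, z1=3, y2=4, z2=5. *)
Definition X6 : 'M[int]_6 :=
  graph_of 6 [:: (2%N, 3%N, 2%N); (3%N, 0%N, 1%N); (0%N, 2%N, 1%N);
                 (4%N, 5%N, 2%N); (5%N, 0%N, 1%N); (0%N, 4%N, 1%N);
                 (1%N, 0%N, 1%N)].

(* X_7: vertices x=0, y1=1, z1=2, y2=3, z2=4, y3=5, z3=6. *)
Definition X7 : 'M[int]_7 :=
  graph_of 7 [:: (1%N, 2%N, 2%N); (2%N, 0%N, 1%N); (0%N, 1%N, 1%N);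
                 (3%N, 4%N, 2%N); (4%N, 0%N, 1%N); (0%N, 3%N, 1%N);
                 (5%N, 6%N, 2%N); (6%N, 0%N, 1%N); (0%N, 5%N, 1%N)].

From mathcomp Require Import all_boot all_order all_algebra all_fingroup.
Set Implicit Arguments. Unset Strict Implicit. Unset Printing Implicit Defensive.
Import Order.TTheory GRing.Theory Num.Theory.
Local Open Scope ring_scope.

(* A graph is mutation-finite as soon as it belongs to a finite list of graphs
   that is closed under mutation up to isomorphism: mutation commutes with
   relabelling, so every graph of the mutation class stays isomorphic to a
   member of the list.  The mutation class of X6 has five isomorphism classes
   and that of X7 has two; closure of these lists is checked by computation,
   each mutation being matched with a representative through an explicit
   product of transpositions. *)

Lemma relabel1 n (B : 'M[int]_n) : relabel 1 B = B.
Proof. by apply/matrixP => i j; rewrite !mxE !perm1. Qed.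

Lemma relabelM n (s t : 'S_n) (B : 'M[int]_n) :
  relabel s (relabel t B) = relabel (s * t) B.
Proof. by apply/matrixP => i j; rewrite !mxE !permM. Qed.

Lemma mutation_relabel n (s : 'S_n) k (B : 'M[int]_n) :
  mutation k (relabel s B) = relabel s (mutation (s k) B).
Proof. by apply/matrixP => i j; rewrite !mxE !(inj_eq perm_inj). Qed.

Definition mutation_closed n (l : seq 'M[int]_n) : Prop :=
  forall B, B \in l -> forall k, exists2 C, C \in l & isomorphic C (mutation k B).

Lemma mutation_finite_of_closed n (l : seq 'M[int]_n) B :
  B \in l -> mutation_closed l -> mutation_finite B.
Proof.
move=> Bl closed_l; exists l => C; elim=> [|k {}C _ [D Dl [s ->]]|s {}C _ [D Dl [t ->]]].
- by exists B => //; exists 1%g; rewrite relabel1.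
- have [E El [t mutDE]] := closed_l D Dl (s k).
  by exists E => //; exists (s * t)%g; rewrite mutation_relabel mutDE relabelM.
- by exists D => //; exists (s * t)%g; rewrite relabelM.
Qed.

(* Matrices are locked, so the closure test computes on functions [nat -> nat -> int]. *)
Definition mx_of_fun n (f : nat -> nat -> int) : 'M[int]_n := \matrix_(i, j) f i j.

Definition eq_on_square n (f g : nat -> nat -> int) : bool :=
  all (fun i => all (fun j => f i j == g i j) (iota 0 n)) (iota 0 n).

Lemma mx_of_fun_eq n f g : eq_on_square n f g -> mx_of_fun n f = mx_of_fun n g.
Proof.
move=> /allP fg; apply/matrixP => i j; rewrite !mxE.
have /fg /allP /(_ j) : (i : nat) \in iota 0 n by rewrite mem_iota ltn_ord.
by rewrite mem_iota ltn_ord => /(_ isT) /eqP.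
Qed.

Definition mutation_fun (k : nat) (f : nat -> nat -> int) (i j : nat) : int :=
  if (i == k)%N || (j == k)%N then - f i j
  else f i j + pos_part (f i k) * pos_part (f k j)
             - pos_part (- f i k) * pos_part (- f k j).

Lemma mutation_mx_of_fun n (k : 'I_n) f :
  mutation k (mx_of_fun n f) = mx_of_fun n (mutation_fun k f).
Proof. by apply/matrixP => i j; rewrite !mxE. Qed.

Lemma relabel_mx_of_fun n (s : 'S_n) (g : nat -> nat) f :
  (forall i : 'I_n, s i = g i :> nat) ->
  relabel s (mx_of_fun n f) = mx_of_fun n (fun i j => f (g i) (g j)).
Proof. by move=> sg; apply/matrixP => i j; rewrite !mxE !sg. Qed.

Definition swapn (a b x : nat) : nat :=
  if x == a then b else if x == b then a else x.

Lemma tperm_inord n (a b : nat) (i : 'I_n.+1) : (a < n.+1)%N -> (b < n.+1)%N ->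
  tperm (inord a) (inord b) i = swapn a b i :> nat.
Proof.
move=> an bn; rewrite /swapn; case: tpermP => [->|->|ia ib].
- by rewrite !inordK ?eqxx.
- by rewrite !inordK // eqxx; case: eqP.
have ne_val (c : nat) : (c < n.+1)%N -> i != inord c :> 'I_n.+1 -> (i : nat) != c.
  by move=> cn /eqP ic; apply/eqP => eic; apply: ic; apply/val_inj; rewrite /= inordK.
by rewrite (negPf (ne_val a an (introN eqP ia))) (negPf (ne_val b bn (introN eqP ib))).
Qed.

Definition in_range n (p : nat * nat) : bool := (p.1 < n)%N && (p.2 < n)%N.

Definition transpositions n (ps : seq (nat * nat)) : 'S_n.+1 :=
  foldr (fun p s => tperm (inord p.1) (inord p.2) * s)%g 1%g ps.

Definition swaps_fun (ps : seq (nat * nat)) : nat -> nat :=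
  foldr (fun p g x => g (swapn p.1 p.2 x)) id ps.

Lemma transpositionsE n ps (i : 'I_n.+1) : all (in_range n.+1) ps ->
  transpositions n ps i = swaps_fun ps i :> nat.
Proof.
elim: ps i => [|p ps IH] i /=; first by rewrite perm1.
by case/andP=> /andP [p1n p2n] psn; rewrite permM IH // tperm_inord.
Qed.

Definition arrows_fun (arrows : seq (nat * nat * nat)) (i j : nat) : int :=
  foldr (fun (a : nat * nat * nat) (acc : int) =>
      (if (a.1.1 == j) && (a.1.2 == i) then (a.2 : int) else 0)
      - (if (a.1.1 == i) && (a.1.2 == j) then (a.2 : int) else 0) + acc)
    0 arrows.

Lemma graph_of_fun n arrows : graph_of n arrows = mx_of_fun n (arrows_fun arrows).
Proof.
apply/matrixP => i j; rewrite !mxE.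
by elim: arrows => [|a arrows IH]; rewrite ?big_nil // big_cons IH.
Qed.

(* For the graph [nth r reps] and a vertex [k], the witness [(t, ps)] at
   position [k] of [nth r wit] claims that mutating at [k] gives [nth t reps]
   relabelled by the product of the transpositions [ps]. *)
Definition mutation_certificate n (reps : seq (seq (nat * nat * nat)))
    (wit : seq (seq (nat * seq (nat * nat)))) : bool :=
  all (fun r => all (fun k =>
      let: (t, ps) := nth (0%N, [::]) (nth [::] wit r) k in
      [&& (t < size reps)%N, all (in_range n) ps &
          eq_on_square n (mutation_fun k (arrows_fun (nth [::] reps r)))
            (fun i j => arrows_fun (nth [::] reps t) (swaps_fun ps i) (swaps_fun ps j))])
    (iota 0 n)) (iota 0 (size reps)).

Lemma mutation_closed_of_certificate n reps wit :
  mutation_certificate n.+1 reps wit -> mutation_closed (map (graph_of n.+1) reps).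
Proof.
move=> /allP cert _ /mapP [a ar ->] k.
have /cert /allP /(_ k) : index a reps \in iota 0 (size reps) by rewrite mem_iota index_mem.
rewrite mem_iota ltn_ord nth_index // => /(_ isT).
case: nth => t ps /and3P [tr psn mut_eq].
exists (graph_of n.+1 (nth [::] reps t)); first by rewrite map_f ?mem_nth.
exists (transpositions n ps).
rewrite !graph_of_fun mutation_mx_of_fun (relabel_mx_of_fun _ (fun i => transpositionsE i psn)).
exact: mx_of_fun_eq.
Qed.

Definition X6_class : seq (seq (nat * nat * nat)) := [::
  [:: (2, 3, 2); (3, 0, 1); (0, 2, 1); (4, 5, 2); (5, 0, 1); (0, 4, 1); (1, 0, 1)];
  [:: (2, 0, 1); (4, 0, 1); (0, 1, 1); (1, 2, 1); (5, 2, 1); (0, 3, 1); (2, 3, 1);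
      (1, 4, 1); (3, 4, 1); (0, 5, 1); (4, 5, 1)];
  [:: (3, 0, 1); (5, 0, 1); (0, 1, 1); (0, 2, 1); (2, 3, 2); (0, 4, 1); (4, 5, 2)];
  [:: (1, 0, 1); (2, 1, 1); (4, 1, 1); (5, 2, 1); (0, 3, 1); (2, 3, 1); (3, 4, 1);
      (0, 5, 1); (4, 5, 1)];
  [:: (4, 0, 1); (2, 1, 1); (0, 2, 1); (3, 2, 1); (0, 3, 1); (1, 3, 1); (5, 3, 1);
      (1, 4, 1); (3, 4, 1); (2, 5, 1); (4, 5, 1)]]%N.

Definition X6_witnesses : seq (seq (nat * seq (nat * nat))) := [::
  [:: (1, [::]); (2, [::]); (0, [:: (2, 3)]); (0, [:: (2, 3)]); (0, [:: (4, 5)]);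
      (0, [:: (4, 5)])];
  [:: (0, [::]); (3, [::]); (4, [::]); (4, [:: (0, 3); (2, 3)]); (4, [:: (2, 4); (3, 5)]);
      (4, [:: (0, 5); (2, 5); (3, 4); (4, 5)])];
  [:: (4, [:: (0, 2); (1, 4); (2, 3); (4, 5)]); (0, [::]); (2, [:: (2, 3)]);
      (2, [:: (2, 3)]); (2, [:: (4, 5)]); (2, [:: (4, 5)])];
  [:: (4, [:: (0, 2); (1, 4); (2, 3); (3, 4); (4, 5)]); (1, [::]);
      (4, [:: (1, 4); (2, 3); (3, 5)]); (1, [:: (0, 4); (1, 3); (2, 4); (3, 5)]);
      (4, [:: (1, 2); (2, 5); (4, 5)]); (1, [:: (0, 2); (1, 5)])];
  [:: (1, [:: (0, 2); (2, 3)]); (1, [:: (0, 4); (1, 4); (2, 3); (3, 4)]); (1, [::]);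
      (2, [:: (0, 3); (1, 5); (2, 3); (4, 5)]); (1, [:: (0, 1); (3, 5)]);
      (3, [:: (1, 4); (2, 4); (4, 5)])]]%N.

Definition X7_class : seq (seq (nat * nat * nat)) := [::
  [:: (1, 2, 2); (2, 0, 1); (0, 1, 1); (3, 4, 2); (4, 0, 1); (0, 3, 1);
      (5, 6, 2); (6, 0, 1); (0, 5, 1)];
  [:: (1, 0, 1); (3, 0, 1); (5, 0, 1); (4, 1, 1); (6, 1, 1); (0, 2, 1); (1, 2, 1);
      (2, 3, 1); (6, 3, 1); (0, 4, 1); (3, 4, 1); (2, 5, 1); (4, 5, 1); (0, 6, 1);
      (5, 6, 1)]]%N.

Definition X7_witnesses : seq (seq (nat * seq (nat * nat))) := [::
  [:: (1, [::]); (0, [:: (1, 2)]); (0, [:: (1, 2)]); (0, [:: (3, 4)]); (0, [:: (3, 4)]);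
      (0, [:: (5, 6)]); (0, [:: (5, 6)])];
  [:: (0, [::]); (1, [:: (0, 2); (1, 2); (3, 6); (4, 6); (5, 6)]);
      (1, [:: (0, 1); (1, 2); (3, 6); (4, 6); (5, 6)]);
      (1, [:: (0, 4); (1, 4); (2, 3); (3, 6); (5, 6)]);
      (1, [:: (0, 3); (1, 4); (2, 3); (3, 6); (5, 6)]);
      (1, [:: (0, 6); (1, 6); (2, 5); (3, 4); (4, 6)]);
      (1, [:: (0, 5); (1, 6); (2, 5); (3, 4); (4, 6)])]]%N.

Lemma X6_certificate : mutation_certificate 6 X6_class X6_witnesses.
Proof. by vm_compute. Qed.

Lemma X7_certificate : mutation_certificate 7 X7_class X7_witnesses.
Proof. by vm_compute. Qed.

Theorem mainTheorem1 : mutation_finite X6 /\ mutation_finite X7.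
Proof.
split.
- apply: (mutation_finite_of_closed (l := map (graph_of 6) X6_class)).
    exact: mem_head.
  exact: mutation_closed_of_certificate X6_certificate.
- apply: (mutation_finite_of_closed (l := map (graph_of 7) X7_class)).
    exact: mem_head.
  exact: mutation_closed_of_certificate X7_certificate.
Qed.
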